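(* Let $0<\eta<2^{-11}$. Every interval $I\subseteq\mathbb{R}$ of length $7\eta$ contains a sub-interval $J\subseteq I$ of length $\eta$ such that $|\mathrm{Re}(H(x))|\ge \eta^3/2^7$ for every $x\in J$. Moreover, if $I=[a,a+7\eta]$ then one can take $J=[a+j\eta,a+(j+1)\eta]$ for some $j\in\{0,1,\dots,6\}$.
   Context: Rudin–Shapiro polynomials: $P_0(z)=Q_0(z)=1$ and for $s\ge0$, $P_{s+1}(z)=P_s(z)+z^{2^s}Q_s(z)$, $Q_{s+1}(z)=P_s(z)-z^{2^s}Q_s(z)$. Let $t$ be an odd positive integer and $T:=2^{t+10}$. For $x\in\mathbb{R}$ define $\alpha(x):=2^{-(t+1)/2}P_t(e^{ix/T})$, $\beta(x):=2^{-(t+1)/2}Q_t(e^{ix/T})$, and $H(x):=e^{ix}\alpha(x)+e^{2ix}\beta(x)$. *)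

From Stdlib Require Import Reals.
From Coquelicot Require Import Coquelicot.
Open Scope R_scope.

Definition cexpi (th : R) : Complex.C := (cos th, sin th).

(* Rudin-Shapiro pair (P_s(z), Q_s(z)):
   P_0 = Q_0 = 1, P_{s+1} = P_s + z^{2^s} Q_s, Q_{s+1} = P_s - z^{2^s} Q_s *)
Fixpoint RS (s : nat) (z : Complex.C) : Complex.C * Complex.C :=
  match s with
  | O => (RtoC 1, RtoC 1)
  | S s' =>
      let (p, q) := RS s' z in
      (Cplus p (Cmult (pow_n z (2 ^ s')) q),
       Cminus p (Cmult (pow_n z (2 ^ s')) q))
  end.

Definition RS_P (s : nat) (z : Complex.C) : Complex.C := fst (RS s z).
Definition RS_Q (s : nat) (z : Complex.C) : Complex.C := snd (RS s z).

Definition Tt (t : nat) : R := 2 ^ (t + 10).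

Definition nrm (t : nat) : R := Rpower 2 (- (INR t + 1) / 2).

Definition alpha (t : nat) (x : R) : Complex.C :=
  Cmult (RtoC (nrm t)) (RS_P t (cexpi (x / Tt t))).
Definition beta (t : nat) (x : R) : Complex.C :=
  Cmult (RtoC (nrm t)) (RS_Q t (cexpi (x / Tt t))).

Definition H (t : nat) (x : R) : Complex.C :=
  Cplus (Cmult (cexpi x) (alpha t x)) (Cmult (cexpi (2 * x)) (beta t x)).

(* Write f := Re H.  Since deg P_t, deg Q_t < 2^t and T = 2^(t+10), f is a sum of
   exponentials e^{iwx} with frequencies w in [1, 1 + 2^-10] and [2, 2 + 2^-10].  Hence
   f^(k)(x) = Re (i^k (A + 2^k B)) up to an error O(k 2^-10), where A = e^{ix} alpha(x) and
   B = e^{2ix} beta(x) satisfy |A|^2 + |B|^2 = 1 by the Rudin-Shapiro identity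
   |P_t|^2 + |Q_t|^2 = 2^(t+1).  The error is controlled by a Bernstein-type inequality for
   the derivatives of P_t(e^{i theta}) and Q_t(e^{i theta}), obtained from the recursion.
   If |f| < eta^3/2^7 at some point of each of the subintervals j = 0, 2, 4, 6, a Taylor
   expansion of order 3 at the first point and divided differences force |f|, |f'|, |f''|
   <= 1/100 and |f'''| <= 1.56 there, which is incompatible with |A|^2 + |B|^2 = 1. *)

From Stdlib Require Import Reals Lra Lia List Classical.
From Coquelicot Require Import Coquelicot.
Import ListNotations.
Open Scope R_scope.

Lemma cexpi_add a b : cexpi (a + b) = Cmult (cexpi a) (cexpi b).
Proof. unfold cexpi, Cmult; simpl. rewrite cos_plus, sin_plus. f_equal; ring. Qed.

Lemma cexpi_0 : cexpi 0 = RtoC 1.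
Proof. unfold cexpi, RtoC. rewrite cos_0, sin_0. reflexivity. Qed.

Lemma Cmod_cexpi th : Cmod (cexpi th) = 1.
Proof.
  unfold Cmod, cexpi; simpl. rewrite !Rmult_1_r, <- sqrt_1. f_equal.
  pose proof (sin2_cos2 th) as E. unfold Rsqr in E. lra.
Qed.

Lemma pow_n_cexpi th n : pow_n (cexpi th) n = cexpi (INR n * th).
Proof.
  induction n as [|n IHn]; simpl pow_n.
  - rewrite Rmult_0_l, cexpi_0. reflexivity.
  - rewrite IHn, S_INR, <- cexpi_add. f_equal; ring.
Qed.

Lemma Cmod_parallelogram a b :
  Cmod (Cplus a b) ^ 2 + Cmod (Cminus a b) ^ 2 = 2 * (Cmod a ^ 2 + Cmod b ^ 2).
Proof. rewrite !Cmod2_alt. destruct a, b. simpl. ring. Qed.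

Lemma Binomial_C_ge0 k j : 0 <= Binomial.C k j.
Proof.
  unfold Binomial.C. apply Rle_mult_inv_pos; [apply pos_INR|].
  apply Rmult_lt_0_compat; apply INR_fact_lt_0.
Qed.

Lemma sum_binomial_lt k : sum_f_R0 (Binomial.C (S k)) k = 2 ^ S k - 1.
Proof.
  pose proof (binomial 1 1 (S k)) as B.
  rewrite tech5, C_n_n, pow1 in B. replace (1 + 1) with 2 in B by ring.
  rewrite B, pow1, Rmult_1_r, Rmult_1_l, Rplus_minus_r.
  apply sum_eq. intros i _. rewrite !pow1. ring.
Qed.

Lemma sum_f_R0_tail_le (X Y : nat -> R) k :
  (forall j, (0 < j)%nat -> X j <= Y j) ->
  sum_f_R0 X k - X O <= sum_f_R0 Y k - Y O.
Proof.
  intros HXY. induction k as [|k IHk]; simpl; [lra|].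
  specialize (HXY (S k) ltac:(lia)). lra.
Qed.

Fixpoint rs_coefs (s : nat) : list R * list R :=
  match s with
  | O => ([1], [1])
  | S s' => let (p, q) := rs_coefs s' in (p ++ q, p ++ map Ropp q)
  end.

Lemma rs_coefs_length s :
  length (fst (rs_coefs s)) = (2 ^ s)%nat /\ length (snd (rs_coefs s)) = (2 ^ s)%nat.
Proof.
  induction s as [|s IHs]; simpl; auto.
  destruct (rs_coefs s) as [p q]; simpl in *. destruct IHs as [Hp Hq].
  rewrite !length_app, length_map. lia.
Qed.

Open Scope C_scope.

Fixpoint lcomb (l : list R) (n0 : nat) (g : nat -> C) : C :=
  match l with
  | [] => RtoC 0
  | c :: l' => RtoC c * g n0 + lcomb l' (S n0) g
  end.

Lemma lcomb_app l1 l2 n0 g :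
  lcomb (l1 ++ l2) n0 g = lcomb l1 n0 g + lcomb l2 (n0 + length l1) g.
Proof.
  revert n0; induction l1 as [|c l1 IH]; intros n0; simpl.
  - rewrite Nat.add_0_r. ring.
  - rewrite IH, Nat.add_succ_comm. ring.
Qed.

Lemma lcomb_ext l n0 g h : (forall n, g n = h n) -> lcomb l n0 g = lcomb l n0 h.
Proof. intros E; revert n0; induction l; intros n0; simpl; auto. rewrite E, IHl; auto. Qed.

Lemma lcomb_shift l n0 m g : lcomb l (n0 + m) g = lcomb l n0 (fun n => g (n + m)%nat).
Proof. revert n0; induction l; intros n0; simpl; auto. rewrite <- IHl. reflexivity. Qed.

Lemma Cmult_lcomb l n0 g u : u * lcomb l n0 g = lcomb l n0 (fun n => u * g n).
Proof. revert n0; induction l; intros n0; simpl; [ring|]. rewrite <- IHl. ring. Qed.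

Lemma lcomb_plus l n0 g h : lcomb l n0 (fun n => g n + h n) = lcomb l n0 g + lcomb l n0 h.
Proof. revert n0; induction l; intros n0; simpl; [ring|]. rewrite IHl. ring. Qed.

Lemma lcomb_map_opp l n0 g : lcomb (map Ropp l) n0 g = - lcomb l n0 g.
Proof. revert n0; induction l; intros n0; simpl; [ring|]. rewrite IHl, RtoC_opp. ring. Qed.

Lemma RS_cexpi s th :
  RS s (cexpi th) = (lcomb (fst (rs_coefs s)) 0 (fun n => cexpi (INR n * th)),
                     lcomb (snd (rs_coefs s)) 0 (fun n => cexpi (INR n * th))).
Proof.
  induction s as [|s IHs]; simpl.
  - rewrite Rmult_0_l, cexpi_0. f_equal; ring.
  - rewrite IHs. destruct (rs_coefs_length s) as [Lp _].
    destruct (rs_coefs s) as [p q]; simpl in *.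
    rewrite !lcomb_app, lcomb_map_opp, Lp, pow_n_cexpi, !lcomb_shift, Cmult_lcomb.
    rewrite (lcomb_ext q 0 (fun n => cexpi (INR (n + 2 ^ s) * th))
               (fun n => cexpi (INR (2 ^ s) * th) * cexpi (INR n * th))).
    + f_equal; ring.
    + intros n. rewrite <- cexpi_add, plus_INR. f_equal. ring.
Qed.

(* As [sum_f_R0], [csum g K] has [K + 1] terms. *)
Fixpoint csum (g : nat -> C) (K : nat) : C :=
  match K with O => g O | S K' => csum g K' + g K end.

Lemma lcomb_csum l n0 g K :
  lcomb l n0 (fun n => csum (g n) K) = csum (fun j => lcomb l n0 (fun n => g n j)) K.
Proof. induction K as [|K IHK]; simpl; auto. rewrite lcomb_plus, IHK. reflexivity. Qed.

Lemma Cmult_csum g K u : u * csum g K = csum (fun j => u * g j) K.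
Proof. induction K as [|K IHK]; simpl; auto. rewrite <- IHK. ring. Qed.

Lemma csum_ext g h K : (forall j, g j = h j) -> csum g K = csum h K.
Proof. intros E; induction K; simpl; rewrite ?IHK, ?E; auto. Qed.

Lemma RtoC_sum_f_R0_mult (a : nat -> R) K z :
  RtoC (sum_f_R0 a K) * z = csum (fun j => RtoC (a j) * z) K.
Proof. induction K as [|K IHK]; simpl; auto. rewrite <- IHK, RtoC_plus. ring. Qed.

Lemma Cmod_csum_le g K : (Cmod (csum g K) <= sum_f_R0 (fun j => Cmod (g j)) K)%R.
Proof.
  induction K as [|K IHK]; simpl; [lra|].
  eapply Rle_trans; [apply Cmod_triangle | lra].
Qed.

Lemma Cmod_csum_tail_le g K :
  (Cmod (csum g K - g O) <= sum_f_R0 (fun j => Cmod (g j)) K - Cmod (g O))%R.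
Proof.
  induction K as [|K IHK]; simpl.
  - replace (g O - g O) with (RtoC 0) by ring. rewrite Cmod_0. lra.
  - replace (csum g K + g (S K) - g O) with ((csum g K - g O) + g (S K)) by ring.
    eapply Rle_trans; [apply Cmod_triangle | lra].
Qed.

(* Up to the factor [i^k], the [k]-th derivative of [th |-> sum_n l_n e^{i n th}]. *)
Definition lmoment (l : list R) (k : nat) (th : R) : C :=
  lcomb l 0 (fun n => RtoC (INR n ^ k) * cexpi (INR n * th)).

Lemma lcomb_shift_moment l k m th :
  lcomb l m (fun n => RtoC (INR n ^ k) * cexpi (INR n * th)) =
  cexpi (INR m * th) *
  csum (fun j => RtoC (Binomial.C k j * INR m ^ (k - j)) * lmoment l j th) k.
Proof.
  rewrite <- (Nat.add_0_l m) at 1. rewrite lcomb_shift.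
  rewrite (lcomb_ext l 0 _ (fun n => csum (fun j =>
     RtoC (Binomial.C k j * INR m ^ (k - j)) *
        (RtoC (INR n ^ j) * cexpi (INR n * th)) * cexpi (INR m * th)) k)).
  - rewrite lcomb_csum, Cmult_csum. apply csum_ext. intros j.
    unfold lmoment. rewrite !Cmult_lcomb. apply lcomb_ext. intros n. ring.
  - intros n. rewrite plus_INR, binomial.
    replace ((INR n + INR m) * th)%R with (INR m * th + INR n * th)%R by ring.
    rewrite cexpi_add.
    transitivity (RtoC (sum_f_R0 (fun i => Binomial.C k i * INR n ^ i * INR m ^ (k - i))%R k)
                  * (cexpi (INR n * th) * cexpi (INR m * th))); [ring|].
    rewrite RtoC_sum_f_R0_mult. apply csum_ext. intros j. rewrite !RtoC_mult. ring.
Qed.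

Definition Pmom s k th := lmoment (fst (rs_coefs s)) k th.
Definition Qmom s k th := lmoment (snd (rs_coefs s)) k th.

Lemma rs_moments_succ s k th :
  let V := cexpi (2 ^ s * th) *
     csum (fun j => RtoC (Binomial.C k j * (2 ^ s) ^ (k - j)) * Qmom s j th) k in
  Pmom (S s) k th = Pmom s k th + V /\ Qmom (S s) k th = Pmom s k th - V.
Proof.
  unfold Pmom, Qmom, lmoment. simpl. destruct (rs_coefs_length s) as [Lp _].
  destruct (rs_coefs s) as [p q]; simpl in *.
  rewrite !lcomb_app, lcomb_map_opp, Lp, Nat.add_0_l, (lcomb_shift_moment q), pow_INR.
  change (INR 2) with 2%R. unfold lmoment.
  split; ring.
Qed.

Lemma rs_parseval s th : (Cmod (Pmom s 0 th) ^ 2 + Cmod (Qmom s 0 th) ^ 2 = 2 ^ S s)%R.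
Proof.
  induction s as [|s IHs].
  - unfold Pmom, Qmom, lmoment. simpl. rewrite Rmult_0_l, cexpi_0.
    replace (RtoC 1 * (RtoC 1 * RtoC 1) + RtoC 0) with (RtoC 1) by ring.
    rewrite Cmod_1. ring.
  - destruct (rs_moments_succ s 0 th) as [-> ->]. simpl csum.
    rewrite C_n_n, Rmult_1_l, Cmult_1_l, Cmod_parallelogram, Cmod_mult, Cmod_cexpi, Rmult_1_l.
    change (2 ^ S (S s))%R with (2 * 2 ^ S s)%R. rewrite <- IHs. ring.
Qed.

Lemma Cmod_binomial_sum_le (q : nat -> C) (m rho : R) k :
  (0 <= m)%R -> (forall j, Cmod (q j) <= m ^ j * rho)%R ->
  (Cmod (csum (fun j => (RtoC (Binomial.C k j * m ^ (k - j)) * q j)%C) k)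
     <= Cmod (q k) + rho * m ^ k * (2 ^ k - 1))%R.
Proof.
  intros Hm Hq. eapply Rle_trans; [apply Cmod_csum_le|].
  destruct k as [|k].
  - simpl. rewrite Cmod_mult, Cmod_R, C_n_n, Rmult_1_l, Rabs_R1. lra.
  - rewrite tech5, Cmod_mult, Cmod_R, C_n_n, Nat.sub_diag, pow_O, Rmult_1_l, Rabs_R1, Rmult_1_l.
    rewrite (Rplus_comm (Cmod _)). apply Rplus_le_compat_r. rewrite <- sum_binomial_lt, scal_sum.
    apply sum_Rle. intros j Hj.
    assert (Hc : (0 <= Binomial.C (S k) j * m ^ (S k - j))%R)
      by (apply Rmult_le_pos; [apply Binomial_C_ge0 | apply pow_le; lra]).
    rewrite Cmod_mult, Cmod_R, Rabs_pos_eq by exact Hc.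
    eapply Rle_trans; [apply Rmult_le_compat_l; [exact Hc | apply Hq]|].
    replace (m ^ S k)%R with (m ^ (S k - j) * m ^ j)%R
      by (rewrite <- pow_add; f_equal; lia).
    apply Req_le. ring.
Qed.

Lemma sq_sum_le_shift a b v N r :
  (0 <= a)%R -> (0 <= b)%R -> (0 <= v)%R -> (0 <= N)%R -> (0 <= r)%R ->
  (a ^ 2 + b ^ 2 <= N ^ 2)%R -> (v <= b + r)%R -> (a ^ 2 + v ^ 2 <= (N + r) ^ 2)%R.
Proof. intros. assert (b <= N)%R by nra. nra. Qed.

Lemma rs_moment_bound_succ s th rho :
  (0 <= rho)%R ->
  (forall j, Cmod (Pmom s j th) ^ 2 + Cmod (Qmom s j th) ^ 2 <= ((2 ^ s) ^ j * rho) ^ 2)%R ->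
  forall k, (Cmod (Pmom (S s) k th) ^ 2 + Cmod (Qmom (S s) k th) ^ 2
             <= 2 * ((2 ^ s) ^ k * 2 ^ k * rho) ^ 2)%R.
Proof.
  intros Hrho IH k.
  assert (Hs : forall j, (0 <= (2 ^ s) ^ j)%R) by (intros; apply pow_le, pow_le; lra).
  assert (HQ : forall j, (Cmod (Qmom s j th) <= (2 ^ s) ^ j * rho)%R).
  { intros j. specialize (IH j). pose proof (Cmod_ge_0 (Pmom s j th)).
    pose proof (Cmod_ge_0 (Qmom s j th)). pose proof (Rmult_le_pos _ _ (Hs j) Hrho). nra. }
  destruct (rs_moments_succ s k th) as [-> ->].
  set (V := cexpi _ * csum _ k).
  assert (HV : (Cmod V <= Cmod (Qmom s k th) + rho * (2 ^ s) ^ k * (2 ^ k - 1))%R).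
  { unfold V. rewrite Cmod_mult, Cmod_cexpi, Rmult_1_l.
    apply Cmod_binomial_sum_le; [apply pow_le; lra | exact HQ]. }
  assert (H2k : (1 <= 2 ^ k)%R) by (apply pow_R1_Rle; lra).
  pose proof (Hs k).
  rewrite Cmod_parallelogram. apply Rmult_le_compat_l; [lra|].
  replace ((2 ^ s) ^ k * 2 ^ k * rho)%R
    with ((2 ^ s) ^ k * rho + rho * (2 ^ s) ^ k * (2 ^ k - 1))%R by ring.
  apply sq_sum_le_shift with (b := Cmod (Qmom s k th)); try apply Cmod_ge_0; auto.
  - apply Rmult_le_pos; auto.
  - apply Rmult_le_pos; [apply Rmult_le_pos|]; auto; lra.
Qed.

Lemma rs_moment_bound s k th :
  (Cmod (Pmom s k th) ^ 2 + Cmod (Qmom s k th) ^ 2 <= ((2 ^ s) ^ k) ^ 2 * 2 ^ S s)%R.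
Proof.
  revert k. induction s as [|s IHs]; intros k.
  - destruct k as [|k]; [rewrite rs_parseval; simpl; lra|].
    assert (E : lmoment [1%R] (S k) th = RtoC 0).
    { unfold lmoment. simpl. rewrite Rmult_0_l. ring. }
    unfold Pmom, Qmom. simpl rs_coefs. simpl fst; simpl snd. rewrite E, Cmod_0.
    rewrite !pow1. simpl. lra.
  - assert (Hrho : (sqrt (2 ^ S s) ^ 2 = 2 ^ S s)%R)
      by (rewrite <- Rsqr_pow2, Rsqr_sqrt; [reflexivity | apply pow_le; lra]).
    eapply Rle_trans; [apply (rs_moment_bound_succ s th (sqrt (2 ^ S s))); [apply sqrt_pos|]|].
    + intros j. rewrite Rpow_mult_distr, Hrho. apply IHs.
    + apply Req_le. rewrite Rpow_mult_distr, Hrho, <- Rpow_mult_distr.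
      rewrite (Rmult_comm (2 ^ s)). change (2 * 2 ^ s)%R with (2 ^ S s)%R.
      change (2 ^ S (S s))%R with (2 * 2 ^ S s)%R. ring.
Qed.

Open Scope R_scope.

Lemma is_derive_Re_lcomb l n0 (u : nat -> C) (w : nat -> R) x :
  is_derive (fun y => Re (lcomb l n0 (fun n => Cmult (u n) (cexpi (w n * y))))) x
    (Re (lcomb l n0 (fun n => Cmult (Cmult (Cmult (u n) Ci) (RtoC (w n))) (cexpi (w n * x))))).
Proof.
  revert n0; induction l as [|c l IH]; intros n0; simpl lcomb.
  - apply (is_derive_const 0).
  - apply is_derive_ext with (f := fun y =>
      c * (Re (u n0) * cos (w n0 * y) - Im (u n0) * sin (w n0 * y))
      + Re (lcomb l (S n0) (fun n => Cmult (u n) (cexpi (w n * y))))).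
    { intros y. rewrite re_plus. f_equal.
      destruct (u n0); unfold cexpi, Cmult, RtoC, Re, Im; simpl; ring. }
    rewrite re_plus.
    apply (is_derive_plus (fun y => c * (Re (u n0) * cos (w n0 * y) - Im (u n0) * sin (w n0 * y)))).
    + replace (Re (Cmult (RtoC c)
                   (Cmult (Cmult (Cmult (u n0) Ci) (RtoC (w n0))) (cexpi (w n0 * x)))))
        with (c * (Re (u n0) * (- w n0 * sin (w n0 * x)) - Im (u n0) * (w n0 * cos (w n0 * x))))
        by (destruct (u n0); unfold cexpi, Cmult, RtoC, Re, Im, Ci; simpl; ring).
      auto_derive; auto. ring.
    + apply IH.
Qed.

Lemma nrm_pos t : 0 < nrm t.
Proof. unfold nrm, Rpower. apply exp_pos. Qed.

Lemma nrm_sq t : nrm t ^ 2 * 2 ^ S t = 1.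
Proof.
  unfold nrm. rewrite <- Rsqr_pow2; unfold Rsqr. rewrite <- Rpower_plus.
  replace (- (INR t + 1) / 2 + - (INR t + 1) / 2) with (- INR (S t)) by (rewrite S_INR; field).
  rewrite Rpower_Ropp, Rpower_pow by lra. field. apply pow_nonzero. lra.
Qed.

Lemma nrm_moment_le t j th :
  nrm t * Cmod (Pmom t j th) <= (2 ^ t) ^ j /\ nrm t * Cmod (Qmom t j th) <= (2 ^ t) ^ j.
Proof.
  pose proof (rs_moment_bound t j th) as B. pose proof (nrm_sq t) as N.
  pose proof (nrm_pos t). pose proof (pow_lt 2 (S t) ltac:(lra)).
  pose proof (Cmod_ge_0 (Pmom t j th)). pose proof (Cmod_ge_0 (Qmom t j th)).
  assert (0 <= (2 ^ t) ^ j) by (apply pow_le; apply pow_le; lra).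
  assert (E : (nrm t * Cmod (Pmom t j th)) ^ 2 + (nrm t * Cmod (Qmom t j th)) ^ 2
              <= ((2 ^ t) ^ j) ^ 2).
  { replace (((2 ^ t) ^ j) ^ 2) with (((2 ^ t) ^ j) ^ 2 * 2 ^ S t * nrm t ^ 2) by nra.
    replace ((nrm t * Cmod (Pmom t j th)) ^ 2 + (nrm t * Cmod (Qmom t j th)) ^ 2)
      with ((Cmod (Pmom t j th) ^ 2 + Cmod (Qmom t j th) ^ 2) * nrm t ^ 2) by ring.
    apply Rmult_le_compat_r; [nra | exact B]. }
  split; nra.
Qed.

Lemma alpha_Pmom t x : alpha t x = Cmult (RtoC (nrm t)) (Pmom t 0 (x / Tt t)).
Proof.
  unfold alpha, RS_P, Pmom, lmoment. rewrite RS_cexpi. simpl fst. f_equal.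
  apply lcomb_ext. intros n. simpl. symmetry. apply Cmult_1_l.
Qed.

Lemma beta_Qmom t x : beta t x = Cmult (RtoC (nrm t)) (Qmom t 0 (x / Tt t)).
Proof.
  unfold beta, RS_Q, Qmom, lmoment. rewrite RS_cexpi. simpl snd. f_equal.
  apply lcomb_ext. intros n. simpl. symmetry. apply Cmult_1_l.
Qed.

Lemma alpha_beta_norm t x : Cmod (alpha t x) ^ 2 + Cmod (beta t x) ^ 2 = 1.
Proof.
  rewrite alpha_Pmom, beta_Qmom, !Cmod_mult, Cmod_R, Rabs_pos_eq by apply Rlt_le, nrm_pos.
  rewrite <- (nrm_sq t), <- (rs_parseval t (x / Tt t)). ring.
Qed.

Section ExponentialSums.

Variable t : nat.
Let T := Tt t.

Lemma T_pos : 0 < T.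
Proof. apply pow_lt. lra. Qed.

Definition expsum_D (l : list R) (w0 : R) (k : nat) (x : R) : C :=
  lcomb l 0 (fun n => Cmult (Cmult (Cpow Ci k) (RtoC ((w0 + INR n / T) ^ k)))
                           (cexpi ((w0 + INR n / T) * x))).

Definition ReH_D (k : nat) (x : R) : R :=
  nrm t * (Re (expsum_D (fst (rs_coefs t)) 1 k x) + Re (expsum_D (snd (rs_coefs t)) 2 k x)).

Lemma is_derive_Re_expsum_D l w0 k x :
  is_derive (fun y => Re (expsum_D l w0 k y)) x (Re (expsum_D l w0 (S k) x)).
Proof.
  unfold expsum_D.
  replace (Re (lcomb l 0 _)) with (Re (lcomb l 0 (fun n =>
    Cmult (Cmult (Cmult (Cmult (Cpow Ci k) (RtoC ((w0 + INR n / T) ^ k))) Ci)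
                 (RtoC (w0 + INR n / T)))
          (cexpi ((w0 + INR n / T) * x))))).
  - apply (is_derive_Re_lcomb l 0 (fun n => Cmult (Cpow Ci k) (RtoC ((w0 + INR n / T) ^ k)))).
  - f_equal. apply lcomb_ext. intros n. simpl. rewrite RtoC_mult. ring.
Qed.

Lemma is_derive_ReH_D k x : is_derive (ReH_D k) x (ReH_D (S k) x).
Proof.
  apply is_derive_scal, (is_derive_plus (fun y => Re (expsum_D _ 1 k y))
                                        (fun y => Re (expsum_D _ 2 k y)));
    apply is_derive_Re_expsum_D.
Qed.

Lemma Re_H_eq x : Re (H t x) = ReH_D 0 x.
Proof.
  unfold H, ReH_D, alpha, beta, RS_P, RS_Q. rewrite RS_cexpi, re_plus. simpl fst; simpl snd.
  assert (E : forall l w0, Cmult (cexpi (w0 * x))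
     (Cmult (RtoC (nrm t)) (lcomb l 0 (fun n => cexpi (INR n * (x / Tt t)))))
     = Cmult (RtoC (nrm t)) (expsum_D l w0 0 x)).
  { intros l w0. unfold expsum_D. rewrite !Cmult_lcomb. apply lcomb_ext. intros n. simpl.
    replace ((w0 + INR n / T) * x) with (w0 * x + INR n * (x / Tt t))
      by (unfold T; field; apply pow_nonzero; lra).
    rewrite cexpi_add. ring. }
  rewrite <- (Rmult_1_l x) at 1. rewrite E, E, !re_scal_l. ring.
Qed.

Lemma expsum_D_binomial l w0 k x :
  expsum_D l w0 k x = Cmult (Cmult (Cpow Ci k) (cexpi (w0 * x)))
     (csum (fun j => Cmult (RtoC (Binomial.C k j * (/ T) ^ j * w0 ^ (k - j)))
                           (lmoment l j (x / T))) k).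
Proof.
  pose proof T_pos. unfold expsum_D.
  rewrite (lcomb_ext l 0 _ (fun n => csum (fun j =>
    Cmult (Cmult (Cmult (Cpow Ci k) (cexpi (w0 * x)))
                 (RtoC (Binomial.C k j * (/ T) ^ j * w0 ^ (k - j))))
          (Cmult (RtoC (INR n ^ j)) (cexpi (INR n * (x / T))))) k)).
  - rewrite lcomb_csum, Cmult_csum. apply csum_ext. intros j. unfold lmoment.
    rewrite !Cmult_lcomb. apply lcomb_ext. intros n. ring.
  - intros n.
    replace ((w0 + INR n / T) * x) with (w0 * x + INR n * (x / T)) by (field; lra).
    rewrite cexpi_add, Rplus_comm, binomial.
    transitivity (Cmult (Cmult (Cpow Ci k) (cexpi (w0 * x)))
      (Cmult (RtoC (sum_f_R0 (fun i => Binomial.C k i * (INR n / T) ^ i * w0 ^ (k - i)) k))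
             (cexpi (INR n * (x / T))))); [ring|].
    rewrite RtoC_sum_f_R0_mult, Cmult_csum. apply csum_ext. intros j.
    unfold Rdiv. rewrite Rpow_mult_distr, !RtoC_mult. ring.
Qed.

Lemma Tinv_pow j : (/ T) ^ j * (2 ^ t) ^ j = (/ 2 ^ 10) ^ j.
Proof.
  rewrite <- Rpow_mult_distr. f_equal. unfold T, Tt. rewrite pow_add.
  field. apply pow_nonzero. lra.
Qed.

(* Only the [j = 0] term of [expsum_D_binomial] is of size 1; the others carry [T^-j]. *)
Lemma Re_expsum_D_approx l w0 k x :
  0 <= w0 -> (forall j th, nrm t * Cmod (lmoment l j th) <= (2 ^ t) ^ j) ->
  Rabs (nrm t * Re (expsum_D l w0 k x) - Re (Cmult (Cpow Ci k)
         (Cmult (RtoC (w0 ^ k))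
                (Cmult (cexpi (w0 * x)) (Cmult (RtoC (nrm t)) (lmoment l 0 (x / T)))))))
  <= (/ 2 ^ 10 + w0) ^ k - w0 ^ k.
Proof.
  intros Hw HZ. pose proof T_pos. pose proof (nrm_pos t).
  assert (HTj : forall j, 0 <= (/ T) ^ j) by (intros; apply pow_le, Rlt_le, Rinv_0_lt_compat; auto).
  rewrite expsum_D_binomial.
  set (g := fun j =>
    Cmult (RtoC (Binomial.C k j * (/ T) ^ j * w0 ^ (k - j))) (lmoment l j (x / T))).
  assert (Eg0 : g O = Cmult (RtoC (w0 ^ k)) (lmoment l 0 (x / T))).
  { unfold g. rewrite C_n_0, Nat.sub_0_r, pow_O, !Rmult_1_l. reflexivity. }
  set (u := Cmult (Cpow Ci k) (cexpi (w0 * x))).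
  match goal with |- Rabs ?E <= _ =>
    replace E with (Re (Cmult (RtoC (nrm t)) (Cmult u (Cminus (csum g k) (g O)))))
      by (rewrite Eg0; unfold Rminus; rewrite <- re_scal_l, <- re_opp, <- re_plus;
          f_equal; unfold u; ring) end.
  eapply Rle_trans; [apply re_le_Cmod|].
  unfold u. rewrite !Cmod_mult, Cmod_R, Cmod_pow, Cmod_Ci, Cmod_cexpi, pow1, Rabs_pos_eq by lra.
  rewrite !Rmult_1_l.
  eapply Rle_trans; [apply Rmult_le_compat_l; [lra | apply Cmod_csum_tail_le]|].
  rewrite Rmult_minus_distr_l, scal_sum, binomial.
  replace (w0 ^ k) with (Binomial.C k 0 * (/ 2 ^ 10) ^ 0 * w0 ^ (k - 0))
    by (rewrite C_n_0, Nat.sub_0_r; ring).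
  replace (nrm t * Cmod (g O)) with (Cmod (g O) * nrm t) by ring.
  apply (sum_f_R0_tail_le (fun j => Cmod (g j) * nrm t)). intros j _.
  assert (Hc : 0 <= Binomial.C k j * (/ T) ^ j * w0 ^ (k - j))
    by (apply Rmult_le_pos; [apply Rmult_le_pos|]; auto using Binomial_C_ge0, pow_le).
  unfold g. rewrite Cmod_mult, Cmod_R, Rabs_pos_eq, <- Tinv_pow by exact Hc.
  replace (Binomial.C k j * ((/ T) ^ j * (2 ^ t) ^ j) * w0 ^ (k - j))
    with ((Binomial.C k j * (/ T) ^ j * w0 ^ (k - j)) * (2 ^ t) ^ j) by ring.
  rewrite Rmult_assoc, (Rmult_comm _ (nrm t)).
  apply Rmult_le_compat_l; auto.
Qed.

End ExponentialSums.

Lemma ReH_D_approx t k x :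
  Rabs (ReH_D t k x - Re (Cmult (Cpow Ci k) (Cplus (Cmult (cexpi x) (alpha t x))
                            (Cmult (RtoC (2 ^ k)) (Cmult (cexpi (2 * x)) (beta t x))))))
  <= ((/ 2 ^ 10 + 1) ^ k - 1) + ((/ 2 ^ 10 + 2) ^ k - 2 ^ k).
Proof.
  pose proof (Re_expsum_D_approx t (fst (rs_coefs t)) 1 k x ltac:(lra)
                (fun j th => proj1 (nrm_moment_le t j th))) as HP.
  pose proof (Re_expsum_D_approx t (snd (rs_coefs t)) 2 k x ltac:(lra)
                (fun j th => proj2 (nrm_moment_le t j th))) as HQ.
  rewrite Rmult_1_l, pow1, Cmult_1_l in HP.
  eapply Rle_trans; [| apply Rplus_le_compat; [exact HP | exact HQ]].
  eapply Rle_trans; [| apply Rabs_triang]. apply Req_le. f_equal.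
  rewrite alpha_Pmom, beta_Qmom, Cmult_plus_distr_l, re_plus. unfold ReH_D, Pmom, Qmom. ring.
Qed.

(* Witnesses: [a + ib = e^{ix} alpha(x)] and [p + iq = e^{2ix} beta(x)]. *)
Lemma ReH_D_main_terms t x : exists a b p q : R,
  a ^ 2 + b ^ 2 + p ^ 2 + q ^ 2 = 1 /\
  Rabs (ReH_D t 0 x - (a + p)) <= / 50 /\
  Rabs (ReH_D t 1 x - (- b - 2 * q)) <= / 50 /\
  Rabs (ReH_D t 2 x - (- a - 4 * p)) <= / 50 /\
  Rabs (ReH_D t 3 x - (b + 8 * q)) <= / 50.
Proof.
  assert (N : Cmod (Cmult (cexpi x) (alpha t x)) ^ 2
              + Cmod (Cmult (cexpi (2 * x)) (beta t x)) ^ 2 = 1)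
    by (rewrite !Cmod_mult, !Cmod_cexpi, !Rmult_1_l; apply alpha_beta_norm).
  destruct (Cmult (cexpi x) (alpha t x)) as [a b] eqn:EA.
  destruct (Cmult (cexpi (2 * x)) (beta t x)) as [p q] eqn:EB.
  rewrite !Cmod2_alt in N. simpl in N.
  exists a, b, p, q.
  assert (Hk : forall k,
    Rabs (ReH_D t k x - Re (Cmult (Cpow Ci k) (Cplus (a, b) (Cmult (RtoC (2 ^ k)) (p, q)))))
    <= ((/ 1024 + 1) ^ k - 1) + ((/ 1024 + 2) ^ k - 2 ^ k)).
  { intros k. rewrite <- EA, <- EB. replace (/ 1024) with (/ 2 ^ 10) by (simpl; lra).
    apply ReH_D_approx. }
  repeat split; [lra | ..].
  all: match goal with |- Rabs (ReH_D _ ?k _ - ?m) <= _ =>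
    replace m with (Re (Cmult (Cpow Ci k) (Cplus (a, b) (Cmult (RtoC (2 ^ k)) (p, q)))))
      by (unfold Cmult, Cplus, RtoC, Ci; simpl; ring);
    eapply Rle_trans; [apply Hk | simpl; lra] end.
Qed.

Lemma ReH_D4_bound t x : Rabs (ReH_D t 4 x) <= 18.
Proof.
  pose proof (ReH_D_approx t 4 x) as H4.
  set (M := Re _) in H4.
  assert (HM : Rabs M <= 17).
  { unfold M. eapply Rle_trans; [apply re_le_Cmod|].
    rewrite Cmod_mult, Cmod_pow, Cmod_Ci, pow1, Rmult_1_l.
    eapply Rle_trans; [apply Cmod_triangle|].
    rewrite !Cmod_mult, !Cmod_cexpi, Cmod_R, !Rmult_1_l, Rabs_pos_eq by lra.
    pose proof (alpha_beta_norm t x). pose proof (Cmod_ge_0 (alpha t x)).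
    pose proof (Cmod_ge_0 (beta t x)).
    assert (Cmod (alpha t x) <= 1) by nra. assert (Cmod (beta t x) <= 1) by nra.
    simpl. lra. }
  pose proof (Rabs_triang_inv (ReH_D t 4 x) M). simpl in H4. lra.
Qed.

Lemma Rabs_le_div g X B g0 : 0 < g0 <= g -> g * Rabs X <= B -> Rabs X <= B / g0.
Proof.
  intros [H1 H2] H3. pose proof (Rabs_pos X).
  apply Rmult_le_reg_r with g0; auto. unfold Rdiv. rewrite Rmult_assoc, Rinv_l by lra. nra.
Qed.

Lemma Rabs_mult_nonneg_l g X : 0 <= g -> Rabs (g * X) = g * Rabs X.
Proof. intros Hg. rewrite Rabs_mult, Rabs_pos_eq by exact Hg. reflexivity. Qed.

Lemma cubic_div_bound v b1 b2 b3 c : 1 <= v -> 0 <= c ->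
  Rabs (b1 * v + b2 * v ^ 2 + b3 * v ^ 3) <= / 64 + c * v ^ 4 ->
  Rabs (b1 + b2 * v + b3 * v ^ 2) <= / 64 + c * v ^ 3.
Proof.
  intros Hv Hc H.
  replace (/ 64 + c * v ^ 3) with ((/ 64 + c * v ^ 3) * v / v) by (field; lra).
  apply Rabs_le_div with (g := v); [lra|].
  rewrite <- Rabs_mult_nonneg_l by lra.
  replace (v * (b1 + b2 * v + b3 * v ^ 2)) with (b1 * v + b2 * v ^ 2 + b3 * v ^ 3) by ring.
  eapply Rle_trans; [apply H | nra].
Qed.

Lemma Rabs_le_of_scaled c X B : 0 < c -> Rabs (X / c) <= B -> Rabs X <= c * B.
Proof.
  intros Hc HB. replace X with (c * (X / c)) by (field; lra).
  rewrite Rabs_mult_nonneg_l by lra. apply Rmult_le_compat_l; lra.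
Qed.

Lemma Rabs_sub_le a b : Rabs (a - b) <= Rabs a + Rabs b.
Proof. unfold Rminus. rewrite <- (Rabs_Ropp b). apply Rabs_triang. Qed.

Lemma divided_difference_le X Y Z g g0 B :
  0 < g0 <= g -> g * Z = X - Y -> Rabs X + Rabs Y <= B -> Rabs Z <= B / g0.
Proof.
  intros Hg EZ HB. apply Rabs_le_div with g; [exact Hg|].
  rewrite <- Rabs_mult_nonneg_l, EZ by lra. pose proof (Rabs_sub_le X Y). lra.
Qed.

Lemma quadratic_coef_bounds v1 v2 v3 b1 b2 b3 :
  1 <= v1 -> v1 + 1 <= v2 -> v2 + 1 <= v3 -> v3 <= 7 ->
  Rabs (b1 + b2 * v1 + b3 * v1 ^ 2) <= 62 / 1000 ->
  Rabs (b1 + b2 * v2 + b3 * v2 ^ 2) <= 95 / 1000 ->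
  Rabs (b1 + b2 * v3 + b3 * v3 ^ 2) <= 142 / 1000 ->
  Rabs b3 <= 26 / 100 /\ Rabs b2 <= 4 /\ Rabs b1 <= 30.
Proof.
  intros h1 h2 h3 h4 E1 E2 E3.
  set (D1 := b1 + b2 * v1 + b3 * v1 ^ 2) in *.
  set (D2 := b1 + b2 * v2 + b3 * v2 ^ 2) in *.
  set (D3 := b1 + b2 * v3 + b3 * v3 ^ 2) in *.
  assert (D12 : Rabs (b2 + b3 * (v1 + v2)) <= 157 / 1000 / 1)
    by (apply (divided_difference_le D2 D1 _ (v2 - v1)); [lra | unfold D1, D2; ring | lra]).
  assert (D13 : Rabs (b2 + b3 * (v1 + v3)) <= 204 / 1000 / 2)
    by (apply (divided_difference_le D3 D1 _ (v3 - v1)); [lra | unfold D1, D3; ring | lra]).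
  assert (B3 : Rabs b3 <= 259 / 1000 / 1)
    by (apply (divided_difference_le (b2 + b3 * (v1 + v3)) (b2 + b3 * (v1 + v2)) _ (v3 - v2));
        [lra | ring | lra]).
  assert (B2 : Rabs b2 <= 4).
  { replace b2 with ((b2 + b3 * (v1 + v2)) - b3 * (v1 + v2)) by ring.
    pose proof (Rabs_sub_le (b2 + b3 * (v1 + v2)) (b3 * (v1 + v2))).
    rewrite Rabs_mult, (Rabs_pos_eq (v1 + v2)) in * by lra. nra. }
  split; [lra | split; [exact B2|]].
  replace b1 with (D1 - b2 * v1 - b3 * v1 ^ 2) by (unfold D1; ring).
  pose proof (Rabs_sub_le (D1 - b2 * v1) (b3 * v1 ^ 2)).
  pose proof (Rabs_sub_le D1 (b2 * v1)).
  rewrite !Rabs_mult, (Rabs_pos_eq v1), (Rabs_pos_eq (v1 ^ 2)) in * by (try apply pow_le; lra).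
  assert (v1 ^ 2 <= 25) by nra.
  pose proof (Rabs_pos b2). pose proof (Rabs_pos b3). nra.
Qed.

Lemma cubic_coef_bounds v1 v2 v3 b1 b2 b3 :
  1 <= v1 -> v1 + 1 <= v2 -> v2 + 1 <= v3 -> v3 <= 7 ->
  Rabs (b1 * v1 + b2 * v1 ^ 2 + b3 * v1 ^ 3) <= / 64 + 3 / 8192 * v1 ^ 4 ->
  Rabs (b1 * v2 + b2 * v2 ^ 2 + b3 * v2 ^ 3) <= / 64 + 3 / 8192 * v2 ^ 4 ->
  Rabs (b1 * v3 + b2 * v3 ^ 2 + b3 * v3 ^ 3) <= / 64 + 3 / 8192 * v3 ^ 4 ->
  Rabs b3 <= 26 / 100 /\ Rabs b2 <= 4 /\ Rabs b1 <= 30.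
Proof.
  intros h1 h2 h3 h4 E1 E2 E3.
  apply cubic_div_bound in E1, E2, E3; try lra.
  assert (v1 ^ 3 <= 5 ^ 3) by (apply pow_incr; lra).
  assert (v2 ^ 3 <= 6 ^ 3) by (apply pow_incr; lra).
  assert (v3 ^ 3 <= 7 ^ 3) by (apply pow_incr; lra).
  apply (quadratic_coef_bounds v1 v2 v3); auto; simpl in *; lra.
Qed.

Lemma unit_vector_forms_not_small a b p q F0 F1 F2 F3 :
  a ^ 2 + b ^ 2 + p ^ 2 + q ^ 2 = 1 ->
  Rabs (F0 - (a + p)) <= / 50 -> Rabs (F1 - (- b - 2 * q)) <= / 50 ->
  Rabs (F2 - (- a - 4 * p)) <= / 50 -> Rabs (F3 - (b + 8 * q)) <= / 50 ->
  Rabs F0 <= / 100 -> Rabs F1 <= / 100 -> Rabs F2 <= / 100 -> Rabs F3 <= 156 / 100 -> False.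
Proof.
  intros N H0 H1 H2 H3 G0 G1 G2 G3.
  apply Rabs_le_between in H0, H1, H2, H3, G0, G1, G2, G3.
  assert (- 2 / 100 <= p <= 2 / 100) by lra.
  assert (- 5 / 100 <= a <= 5 / 100) by lra.
  assert (- 27 / 100 <= q <= 27 / 100) by lra.
  assert (- 57 / 100 <= b <= 57 / 100) by lra.
  nra.
Qed.

(* [1/64 = 2 / 2^7], and [3/8192 = (18/24) / 2048]: against [eta^3] the Taylor remainder
   keeps one factor [eta <= 2^-11]. *)
Lemma taylor3_scaled eta u F0 F1 F2 F3 Y r :
  0 < eta -> eta <= / 2048 -> 0 <= u ->
  Y = F0 + F1 * u + F2 / 2 * u ^ 2 + F3 / 6 * u ^ 3 + r ->
  Rabs Y < eta ^ 3 / 2 ^ 7 -> Rabs F0 < eta ^ 3 / 2 ^ 7 -> Rabs r <= 18 * u ^ 4 / 24 ->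
  Rabs ((F1 / eta ^ 2) * (u / eta) + (F2 / (2 * eta)) * (u / eta) ^ 2 + (F3 / 6) * (u / eta) ^ 3)
   <= / 64 + 3 / 8192 * (u / eta) ^ 4.
Proof.
  intros He He2 Hu EY HY HF Hr.
  set (v := u / eta).
  assert (Hv0 : 0 <= v) by (apply Rdiv_le_0_compat; lra).
  assert (Hv : u = v * eta) by (unfold v; field; lra).
  assert (Hp : 0 < eta ^ 3) by (apply pow_lt; lra).
  replace ((F1 / eta ^ 2) * v + (F2 / (2 * eta)) * v ^ 2 + (F3 / 6) * v ^ 3)
    with ((Y - F0 - r) / eta ^ 3) by (rewrite EY, Hv; field; lra).
  unfold Rdiv at 1. rewrite Rabs_mult, Rabs_inv, (Rabs_pos_eq (eta ^ 3)) by lra.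
  apply (Rmult_le_reg_r (eta ^ 3)); [lra|]. rewrite Rmult_assoc, Rinv_l, Rmult_1_r by lra.
  pose proof (Rabs_sub_le (Y - F0) r). pose proof (Rabs_sub_le Y F0).
  rewrite Hv in Hr.
  assert (v ^ 4 * eta ^ 4 <= v ^ 4 * eta ^ 3 / 2048).
  { replace (v ^ 4 * eta ^ 4) with (v ^ 4 * eta ^ 3 * eta) by ring.
    apply Rmult_le_compat_l; [apply Rmult_le_pos; [apply pow_le|]|]; lra. }
  replace ((v * eta) ^ 4) with (v ^ 4 * eta ^ 4) in Hr by ring.
  simpl pow in *. nra.
Qed.

Section SmallValuesOfSmoothFunctions.

Variable F : nat -> R -> R.
Hypothesis F_derive : forall k x, is_derive (F k) x (F (S k) x).
Hypothesis F4_bound : forall z, Rabs (F 4 z) <= 18.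

Lemma Derive_n_F n x : Derive_n (F 0) n x = F n x.
Proof.
  revert x; induction n as [|n IHn]; intros x; simpl; auto.
  rewrite (Derive_ext _ (F n)) by exact IHn. apply is_derive_unique, F_derive.
Qed.

Lemma ex_derive_n_F n x : ex_derive_n (F 0) n x.
Proof.
  destruct n as [|n]; simpl; auto.
  apply ex_derive_ext with (f := F n); [intros; symmetry; apply Derive_n_F|].
  eexists. apply F_derive.
Qed.

Lemma taylor3_F x0 y : x0 < y -> exists r,
  F 0 y = F 0 x0 + F 1 x0 * (y - x0) + F 2 x0 / 2 * (y - x0) ^ 2 + F 3 x0 / 6 * (y - x0) ^ 3 + r
  /\ Rabs r <= 18 * (y - x0) ^ 4 / 24.
Proof.
  intros Hxy.
  destruct (Taylor_Lagrange (F 0) 3 x0 y Hxy) as [z [_ E]]; [intros; apply ex_derive_n_F|].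
  exists ((y - x0) ^ 4 / 24 * F 4 z). split.
  - rewrite (sum_eq _ (fun m => (y - x0) ^ m / INR (Factorial.fact m) * F m x0)) in E
      by (intros; rewrite Derive_n_F; reflexivity).
    rewrite E, Derive_n_F. simpl. field.
  - assert (0 <= (y - x0) ^ 4 / 24) by (apply Rdiv_le_0_compat; [apply pow_le|]; lra).
    rewrite Rabs_mult_nonneg_l by assumption. specialize (F4_bound z). nra.
Qed.

Lemma cubic_taylor_bound eta x0 y :
  0 < eta -> eta <= / 2048 -> x0 + eta <= y ->
  Rabs (F 0 y) < eta ^ 3 / 2 ^ 7 -> Rabs (F 0 x0) < eta ^ 3 / 2 ^ 7 ->
  let v := (y - x0) / eta in
  Rabs ((F 1 x0 / eta ^ 2) * v + (F 2 x0 / (2 * eta)) * v ^ 2 + (F 3 x0 / 6) * v ^ 3)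
   <= / 64 + 3 / 8192 * v ^ 4.
Proof.
  intros He He2 Hy HFy HFx v.
  destruct (taylor3_F x0 y) as [r [E Hr]]; [lra|].
  apply (taylor3_scaled eta (y - x0) (F 0 x0) _ _ _ (F 0 y) r); auto; lra.
Qed.

Lemma derivatives_small_of_four_small_values eta x0 y1 y2 y3 :
  0 < eta -> eta <= / 2048 ->
  x0 + eta <= y1 -> y1 + eta <= y2 -> y2 + eta <= y3 -> y3 <= x0 + 7 * eta ->
  Rabs (F 0 x0) < eta ^ 3 / 2 ^ 7 -> Rabs (F 0 y1) < eta ^ 3 / 2 ^ 7 ->
  Rabs (F 0 y2) < eta ^ 3 / 2 ^ 7 -> Rabs (F 0 y3) < eta ^ 3 / 2 ^ 7 ->
  Rabs (F 1 x0) <= / 100 /\ Rabs (F 2 x0) <= / 100 /\ Rabs (F 3 x0) <= 156 / 100.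
Proof.
  intros He He2 S1 S2 S3 S4 Y0 Y1 Y2 Y3.
  assert (Hv : forall y y', y + eta <= y' -> (y - x0) / eta + 1 <= (y' - x0) / eta).
  { intros y y' Hyy'. apply (Rmult_le_reg_r eta); [lra|].
    field_simplify; lra. }
  destruct (cubic_coef_bounds ((y1 - x0) / eta) ((y2 - x0) / eta) ((y3 - x0) / eta)
              (F 1 x0 / eta ^ 2) (F 2 x0 / (2 * eta)) (F 3 x0 / 6)) as [B3 [B2 B1]].
  - replace 1 with ((x0 - x0) / eta + 1) by (field; lra). apply Hv; lra.
  - apply Hv; lra.
  - apply Hv; lra.
  - apply (Rmult_le_reg_r eta); [lra|]. field_simplify; lra.
  - apply cubic_taylor_bound; auto; lra.
  - apply cubic_taylor_bound; auto; lra.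
  - apply cubic_taylor_bound; auto; lra.
  - split; [|split].
    + eapply Rle_trans; [apply (Rabs_le_of_scaled (eta ^ 2)); [apply pow_lt|]; eauto|].
      simpl. nra.
    + eapply Rle_trans; [apply (Rabs_le_of_scaled (2 * eta)); [lra|]; eauto|]. lra.
    + eapply Rle_trans; [apply (Rabs_le_of_scaled 6); [lra|]; eauto|]. lra.
Qed.

End SmallValuesOfSmoothFunctions.

Lemma ReH_not_small_at_four_points t eta x0 y1 y2 y3 :
  0 < eta -> eta <= / 2048 ->
  x0 + eta <= y1 -> y1 + eta <= y2 -> y2 + eta <= y3 -> y3 <= x0 + 7 * eta ->
  Rabs (Re (H t x0)) < eta ^ 3 / 2 ^ 7 -> Rabs (Re (H t y1)) < eta ^ 3 / 2 ^ 7 ->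
  Rabs (Re (H t y2)) < eta ^ 3 / 2 ^ 7 -> Rabs (Re (H t y3)) < eta ^ 3 / 2 ^ 7 -> False.
Proof.
  intros He He2 S1 S2 S3 S4 Y0 Y1 Y2 Y3. rewrite !Re_H_eq in *.
  destruct (derivatives_small_of_four_small_values (ReH_D t) (is_derive_ReH_D t)
              (ReH_D4_bound t) eta x0 y1 y2 y3) as [D1 [D2 D3]]; auto.
  destruct (ReH_D_main_terms t x0) as [a [b [p [q [N [A0 [A1 [A2 A3]]]]]]]].
  apply (unit_vector_forms_not_small a b p q _ _ _ _ N A0 A1 A2 A3); auto.
  assert (eta ^ 3 <= 1) by (simpl; nra). simpl in Y0. lra.
Qed.

Theorem lemma3p4 (t : nat) (ht_odd : Nat.Odd t) (ht_pos : (0 < t)%nat)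
  (eta : R) (heta0 : 0 < eta) (heta1 : eta < / 2 ^ 11) (a : R) :
  exists j : nat, (j <= 6)%nat /\
    forall x : R, a + INR j * eta <= x <= a + (INR j + 1) * eta ->
      eta ^ 3 / 2 ^ 7 <= Rabs (Re (H t x)).
Proof.
  apply NNPP. intros no_good_j.
  assert (small : forall j, (j <= 6)%nat -> exists x,
            a + INR j * eta <= x <= a + (INR j + 1) * eta /\ Rabs (Re (H t x)) < eta ^ 3 / 2 ^ 7).
  { intros j Hj. apply NNPP. intros no_small. apply no_good_j. exists j. split; [exact Hj|].
    intros x Hx. apply Rnot_lt_le. intros Hlt. apply no_small. exists x. auto. }
  destruct (small 0%nat) as [x0 [R0 Y0]]; [lia|].
  destruct (small 2%nat) as [y1 [R1 Y1]]; [lia|].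
  destruct (small 4%nat) as [y2 [R2 Y2]]; [lia|].
  destruct (small 6%nat) as [y3 [R3 Y3]]; [lia|].
  simpl INR in R0, R1, R2, R3. simpl pow in heta1.
  apply (ReH_not_small_at_four_points t eta x0 y1 y2 y3); auto; lra.
Qed.
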